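(* Let $K$ be a number field and $S$ a finite set of places of $K$ containing all archimedean places such that $\mathcal{O}_S^*$ is infinite and $\mathcal{O}_S$ is a principal ideal domain. Let $X\subset\mathbb{P}^n_K$ be a projective variety over $K$, $L\subset X$ a line over $K$, and $D\subset X$ a proper closed subvariety over $K$. Suppose that $L\cap D$ consists of two $K$-rational points $A$ and $B$ which are $S$-coprime, and that $L_v\cap D_v=\{A_v,B_v\}$ for every finite place $v\notin S$. Then the set $L(K)\cap(X\setminus D)(\mathcal{O}_S)$ is infinite.
   Context: $\mathcal{O}_S=\{x\in K: v(x)\ge0 \text{ for all finite } v\notin S\}$. Reduction: for a closed subvariety $Z\subset\mathbb{P}^n_K$ with radical homogeneous ideal $I$, $Z_v\subset\mathbb{P}^n_{k_v}$ is the zero set of the image of $I\cap\mathcal{O}_v[X_0,\dots,X_n]$ in $k_v[X_0,\dots,X_n]$ ($\mathcal{O}_v$ the valuation ring at the finite place $v$, $\mathfrak{m}_v$ its maximal ideal, $k_v$ its residue field); for $x\in\mathbb{P}^n(K)$, $x_v$ is its reduction. $x\in X(K)$ is an $S$-integral point of $X\setminus D$ if $x_v\notin D_v$ for every finite $v\notin S$. Two points $A,B\in\mathbb{P}^n(K)$ are $S$-coprime if $A_v\ne B_v$ for every finite $v\notin S$. *)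

From HB Require Import structures.
From mathcomp Require Import all_boot all_order all_algebra all_field.
From mathcomp Require Import mpoly.
From Stdlib Require List.
Set Implicit Arguments. Unset Strict Implicit. Unset Printing Implicit Defensive.
Import Order.TTheory GRing.Theory Num.Theory.
Local Open Scope ring_scope.

(* A number field is a finite-dimensional field extension K of Q:
   K : fieldExtType rat.  Points of P^n are given by coordinate vectors
   'I_n.+1 -> K (nonzero), homogeneous polynomials live in {mpoly K[n.+1]}. *)

Section Defs.
Variable K : fieldType.

(* A finite place v of a number field K is represented by its valuation
   ring O_v: a subring of K, different from K, such that for every
   nonzero x, x \in O_v or x^-1 \in O_v. *)
Definition finite_place (O : pred K) : Prop :=
  [/\ 1 \in O,
      (forall x y, x \in O -> y \in O -> x - y \in O),
      (forall x y, x \in O -> y \in O -> x * y \in O),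
      (forall x, x != 0 -> x \in O \/ x^-1 \in O) &
      (exists x, x \notin O)].

Definition max_ideal (O : pred K) (x : K) : Prop :=
  x \in O /\ (x = 0 \/ x^-1 \notin O).

Definition notin_places (S : seq (pred K)) (O : pred K) : Prop :=
  forall w, List.In w S -> ~ (w =i O).

Definition OS (S : seq (pred K)) (x : K) : Prop :=
  forall O, finite_place O -> notin_places S O -> x \in O.

Definition OS_unit (S : seq (pred K)) (u : K) : Prop :=
  OS S u /\ u != 0 /\ OS S u^-1.

Definition OS_units_infinite (S : seq (pred K)) : Prop :=
  forall s : seq K, exists u, OS_unit S u /\ u \notin s.

Definition OS_ideal (S : seq (pred K)) (I : K -> Prop) : Prop :=
  [/\ (forall x, I x -> OS S x), I 0,
      (forall x y, I x -> I y -> I (x + y)) &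
      (forall r x, OS S r -> I x -> I (r * x))].

Definition OS_PID (S : seq (pred K)) : Prop :=
  forall I, OS_ideal S I ->
    exists2 a, OS S a & forall x, I x <-> exists2 r, OS S r & x = r * a.

Variable n : nat.
Local Notation poly := {mpoly K[n.+1]}.
Local Notation vec := ('I_n.+1 -> K).

Definition homog_component (d : nat) (f : poly) : poly :=
  \sum_(m <- msupp f | mdeg m == d) f@_m *: 'X_[m].

Definition radical_homog_ideal (I : poly -> Prop) : Prop :=
  [/\ I 0,
      (forall f g, I f -> I g -> I (f + g)),
      (forall f g, I f -> I (g * f)),
      (forall f d, I f -> I (homog_component d f)) &
      (forall f k, I (f ^+ k.+1) -> I f)].

(* a closed subvariety of P^n_K, given by its radical homogeneous ideal
   (a proper ideal: 1 is not in it) *)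
Definition closed_subvariety (I : poly -> Prop) : Prop :=
  radical_homog_ideal I /\ ~ I 1.

Definition nonzero_vec (x : vec) : Prop := exists i, x i != 0.

Definition Kpoint (I : poly -> Prop) (x : vec) : Prop :=
  nonzero_vec x /\ forall f, I f -> f.@[x] = 0.

Definition proportional (x y : vec) : Prop :=
  exists2 c : K, c != 0 & forall i, x i = c * y i.

(* The line through a and b (linearly independent): ideal of all
   polynomials vanishing on the K-span of a and b (K is infinite). *)
Definition line_ideal (a b : vec) (f : poly) : Prop :=
  forall s t : K, f.@[fun i => s * a i + t * b i] = 0.

Definition lin_indep2 (a b : vec) : Prop :=
  forall s t : K, (forall i, s * a i + t * b i = 0) -> s = 0 /\ t = 0.

Definition is_line (I : poly -> Prop) : Prop :=
  exists a b, lin_indep2 a b /\ forall f, I f <-> line_ideal a b f.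

(* Geometric intersection: for every field F and embedding phi : K -> F,
   the F-points of Z(I) /\ Z(J) are exactly the images of the given points. *)
Definition geom_intersection_is2 (I J : poly -> Prop) (A B : vec) : Prop :=
  forall (F : fieldType) (phi : {rmorphism K -> F}) (y : 'I_n.+1 -> F),
    (exists i, y i != 0) ->
    (forall f, I f -> (map_mpoly phi f).@[y] = 0) ->
    (forall f, J f -> (map_mpoly phi f).@[y] = 0) ->
    (exists c : F, forall i, y i = c * phi (A i)) \/
    (exists c : F, forall i, y i = c * phi (B i)).

Definition coeffs_in (O : pred K) (f : poly) : Prop :=
  forall m, f@_m \in O.

Definition primitive_rep (O : pred K) (x : vec) : Prop :=
  (forall i, x i \in O) /\ exists i, ~ max_ideal O (x i).

(* x_v \in Z_v for a primitive representative x: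
   every f \in I \cap O_v[X] has f(x) in m_v, i.e. the image of f in
   k_v[X] vanishes at the reduction x_v *)
Definition red_in (O : pred K) (I : poly -> Prop) (x : vec) : Prop :=
  forall f, I f -> coeffs_in O f -> max_ideal O f.@[x].

Definition red_eq (O : pred K) (a b : vec) : Prop :=
  exists c, [/\ c \in O, c != 0, c^-1 \in O &
                forall i, max_ideal O (a i - c * b i)].

Definition red_notin (O : pred K) (I : poly -> Prop) (x : vec) : Prop :=
  forall x', primitive_rep O x' -> proportional x' x -> ~ red_in O I x'.

Definition red_neq (O : pred K) (A B : vec) : Prop :=
  forall a b, primitive_rep O a -> proportional a A ->
              primitive_rep O b -> proportional b B -> ~ red_eq O a b.

(* residue maps O_v -> F onto a field F over k_v (psi is only meaningful on O_v):
   psi restricted to O_v is a ring morphism with kernel m_v *)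
Definition residue_map (O : pred K) (F : fieldType) (psi : K -> F) : Prop :=
  [/\ psi 1 = 1,
      (forall x y, x \in O -> y \in O -> psi (x + y) = psi x + psi y),
      (forall x y, x \in O -> y \in O -> psi (x * y) = psi x * psi y) &
      (forall x, x \in O -> (psi x = 0 <-> max_ideal O x))].

(* L_v \cap D_v = {A_v, B_v} as sets of geometric points: for every field
   F over k_v, the F-points of the reduction of Z(I) /\ Z(J) are exactly
   the reductions of A and B (the inclusion {A_v,B_v} \subset L_v \cap D_v
   is automatic since A, B lie on L and D). *)
Definition red_intersection_is2 (O : pred K) (I J : poly -> Prop) (A B : vec)
  : Prop :=
  forall a b, primitive_rep O a -> proportional a A ->
              primitive_rep O b -> proportional b B ->
  forall (F : fieldType) (psi : K -> F), residue_map O psi ->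
  forall y : 'I_n.+1 -> F, (exists i, y i != 0) ->
    (forall f, I f -> coeffs_in O f -> mmap psi y f = 0) ->
    (forall f, J f -> coeffs_in O f -> mmap psi y f = 0) ->
    (exists c : F, forall i, y i = c * psi (a i)) \/
    (exists c : F, forall i, y i = c * psi (b i)).

Definition S_integral (S : seq (pred K)) (IX ID : poly -> Prop) (x : vec)
  : Prop :=
  Kpoint IX x /\
  forall O, finite_place O -> notin_places S O -> red_notin O ID x.

Definition S_coprime (S : seq (pred K)) (A B : vec) : Prop :=
  forall O, finite_place O -> notin_places S O -> red_neq O A B.

Definition infinite_proj_set (P : vec -> Prop) : Prop :=
  forall s : seq vec, exists x, [/\ P x, nonzero_vec x &
                                   forall y, List.In y s -> ~ proportional x y].

End Defs.

From HB Require Import structures.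
From mathcomp Require Import all_boot all_order all_algebra all_field.
From mathcomp Require Import mpoly ring.
From Stdlib Require List.
From Stdlib Require Import Classical.
Set Implicit Arguments. Unset Strict Implicit. Unset Printing Implicit Defensive.
Import GRing.Theory.
Local Open Scope ring_scope.

(* Clearing denominators (possible since O_S is a principal ideal domain) gives
   representatives a, b of A, B whose coordinates generate the unit ideal of O_S,
   so they reduce to points a_v, b_v of P^n(k_v) at every finite place v outside S.
   For a unit u of O_S the point a + u b lies on L, and modulo v it is
   a_v + u_v b_v with u_v <> 0.  If it lay on D_v it would be A_v or B_v, which
   would make a_v and b_v proportional, contradicting S-coprimality.  Distinct
   units give distinct points of L, and O_S^* is infinite. *)

Definition OS_unimodular (K : fieldType) n (S : seq (pred K)) (a : 'I_n.+1 -> K) :=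
  (forall i, OS S (a i)) /\
  exists2 r : 'I_n.+1 -> K, (forall i, OS S (r i)) & \sum_i r i * a i = 1.

Section ValuationRing.
Variables (K : fieldType) (O : pred K).
Hypothesis HO : finite_place O.

Lemma vring_subring_closed : subring_closed O.
Proof. by case: HO => ? ? ? _ _; split. Qed.
HB.instance Definition _ := GRing.isSubringClosed.Build K O vring_subring_closed.

Lemma vring_or_inv x : x != 0 -> x \in O \/ x^-1 \in O.
Proof. by case: HO => _ _ _ + _; apply. Qed.

Lemma max_ideal_vring x : max_ideal O x -> x \in O. Proof. by case. Qed.

Lemma max_ideal0 : max_ideal O 0. Proof. by split; [exact: rpred0 | left]. Qed.

Lemma max_ideal_unit x : x != 0 -> x^-1 \in O -> ~ max_ideal O x.
Proof. by move=> x0 xiO [_ [/eqP|]]; [rewrite (negPf x0) | rewrite xiO]. Qed.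

Lemma max_ideal1 : ~ max_ideal O 1.
Proof. by apply: max_ideal_unit; rewrite ?oner_neq0 // invr1 rpred1. Qed.

Lemma max_idealPn x : x \in O -> ~ max_ideal O x -> x != 0 /\ x^-1 \in O.
Proof.
move=> xO xm; have x0 : x != 0 by apply/eqP => x0; apply: xm; split=> //; left.
by split=> //; apply/negPn/negP => xiO; apply: xm; split=> //; right.
Qed.

Lemma max_ideal_inv x : x \notin O -> max_ideal O x^-1.
Proof.
move=> xO; have x0 : x != 0 by apply: contraNneq xO => ->; exact: rpred0.
have [xO'|xiO] := vring_or_inv x0; first by rewrite xO' in xO.
by split=> //; right; rewrite invrK.
Qed.

Lemma max_idealMr x y : max_ideal O x -> y \in O -> max_ideal O (x * y).
Proof.
case=> xO xm yO; split; first exact: rpredM.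
have [->|y0] := eqVneq y 0; first by left; rewrite mulr0.
case: xm => [->|xiO]; first by left; rewrite mul0r.
have [->|x0] := eqVneq x 0; first by left; rewrite mul0r.
right; apply: contra xiO => xyiO.
suff -> : x^-1 = y * (x * y)^-1 by rewrite rpredM.
by rewrite invfM mulrCA divff ?mulr1.
Qed.

Lemma max_idealD x y : max_ideal O x -> max_ideal O y -> max_ideal O (x + y).
Proof.
move=> xm ym; have [->|x0] := eqVneq x 0; first by rewrite add0r.
have [->|y0] := eqVneq y 0; first by rewrite addr0.
have [yxO|xyO] := vring_or_inv (mulf_neq0 y0 (invr_neq0 x0)).
  have -> : x + y = x * (1 + y / x) by rewrite mulrDr mulr1 mulrCA divff ?mulr1.
  by apply: max_idealMr; rewrite // rpredD ?rpred1.
have -> : x + y = y * (x / y + 1) by rewrite mulrDr mulr1 mulrCA divff ?mulr1.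
by apply: max_idealMr; rewrite // rpredD ?rpred1 // -[x / y]invf_div.
Qed.

(* Valuation rings are integrally closed: if [x] were not in [O], dividing the
   equation by [x ^+ k] would express [x] through [x^-1 \in O]. *)
Lemma vring_integral k (c : nat -> K) x :
  (forall i, c i \in O) -> x ^+ k.+1 + \sum_(i < k.+1) c i * x ^+ i = 0 ->
  x \in O.
Proof.
move=> cO root; apply/negPn/negP => xO.
have x0 : x != 0 by apply: contraNneq xO => ->; exact: rpred0.
have [xO'|xiO] := vring_or_inv x0; first by rewrite xO' in xO.
have xkx : x ^+ k * (x + \sum_(i < k.+1) c i * x^-1 ^+ (k - i)) = 0.
  rewrite -[RHS]root mulrDr -exprSr mulr_sumr; congr (_ + _).
  apply: eq_bigr => i _; rewrite mulrCA; congr (_ * _).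
  have ki : (k - i + i = k)%N := subnK (ltnSE (ltn_ord i)).
  by rewrite -{1}ki exprD exprVn mulrAC mulfV ?mul1r // expf_neq0.
move/eqP: xkx; rewrite mulf_eq0 expf_eq0 (negPf x0) andbF /= addr_eq0 => /eqP ex.
by move: xO; rewrite ex rpredN rpred_sum // => i _; rewrite rpredM ?rpredX.
Qed.

Lemma vring_scaled_root k (c : nat -> K) d x :
  d \in O -> (forall i, d * c i \in O) ->
  x ^+ k.+1 + \sum_(i < k.+1) c i * x ^+ i = 0 -> d * x \in O.
Proof.
move=> dO dcO root.
apply: (@vring_integral k (fun i => d ^+ (k - i) * (d * c i))).
  by move=> i; rewrite rpredM ?rpredX.
rewrite -[RHS](mulr0 (d ^+ k.+1)) -[in RHS]root mulrDr exprMn; congr (_ + _).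
rewrite mulr_sumr; apply: eq_bigr => i _.
have ki : (k - i + i = k)%N := subnK (ltnSE (ltn_ord i)).
by rewrite exprMn -[in d ^+ k.+1]ki -addSn exprD exprS; ring.
Qed.

Section PrimitiveRepresentatives.
Variable n : nat.
Implicit Types a b : 'I_n.+1 -> K.

Lemma primitive_scale_unit a b c :
  primitive_rep O a -> primitive_rep O b -> (forall i, a i = c * b i) ->
  [/\ c \in O, c != 0 & c^-1 \in O].
Proof.
move=> [aO [j aj]] [bO [k bk]] abc.
have c0 : c != 0 by apply: contra_notN aj => /eqP c0; rewrite abc c0 mul0r; exact: max_ideal0.
split=> //; apply/negPn/negP => cO.
  apply: bk; rewrite -[b k](mulKf c0) -abc; exact: max_idealMr (max_ideal_inv cO) (aO k).
apply: aj; rewrite abc -[c]invrK; exact: max_idealMr (max_ideal_inv cO) (bO j).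
Qed.

Lemma red_eq_scale a b c :
  primitive_rep O a -> primitive_rep O b -> (forall i, a i = c * b i) -> red_eq O a b.
Proof.
move=> pa pb abc; have [cO c0 ciO] := primitive_scale_unit pa pb abc.
by exists c; split=> // i; rewrite abc subrr; exact: max_ideal0.
Qed.

Lemma lin_indep2_of_not_red_eq a b :
  primitive_rep O a -> primitive_rep O b -> ~ red_eq O a b -> lin_indep2 a b.
Proof.
move=> pa pb nab s t st0; have [s0|s0] := eqVneq s 0.
  split=> //; case: pb => _ [j bj]; apply/eqP; apply: contra_notT bj => t0.
  have := st0 j; rewrite s0 mul0r add0r => /eqP; rewrite mulf_eq0 (negPf t0) => /eqP ->.
  exact: max_ideal0.
case: nab; apply: (@red_eq_scale _ _ (- t / s)) => // i.
apply: (mulfI s0); rewrite mulrA mulrCA divff // mulr1 mulNr.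
by apply/eqP; rewrite -addr_eq0 st0.
Qed.

Lemma unimodular_primitive_rep S a :
  notin_places S O -> OS_unimodular S a -> primitive_rep O a.
Proof.
move=> vS [aS [r rS ra1]]; have aO i : a i \in O by exact: aS.
split=> //; apply: NNPP => nprim; apply: max_ideal1; rewrite -ra1.
apply: (big_ind (max_ideal O)) => [|x y|i _]; [exact: max_ideal0 | exact: max_idealD |].
rewrite mulrC; apply: max_idealMr; last exact: rS.
by apply: NNPP => ai; apply: nprim; exists i.
Qed.

End PrimitiveRepresentatives.

Section ResidueField.
Local Open Scope quotient_scope.

Definition vring := {x : K | x \in O}.
HB.instance Definition _ := SubChoice.on vring.
HB.instance Definition _ := [SubChoice_isSubComNzRing of vring by <:].

Definition vring_max : pred vring := fun x => (val x == 0) || ((val x)^-1 \notin O).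

Lemma vring_maxE (x : vring) : (x \in vring_max) <-> max_ideal O (val x).
Proof.
rewrite /max_ideal unfold_in /vring_max; split.
  by case/orP => [/eqP|]; split; rewrite ?(valP x) //; [left | right].
by case=> _ [->|->]; rewrite ?eqxx ?orbT.
Qed.

Lemma vring_max_idealr : idealr_closed vring_max.
Proof.
split; first by rewrite unfold_in /vring_max eqxx.
  by rewrite unfold_in /vring_max oner_eq0 invr1 rpred1.
move=> a u v /vring_maxE um /vring_maxE vm; apply/vring_maxE => /=.
by apply: max_idealD => //; rewrite mulrC; apply: max_idealMr => //; exact: valP.
Qed.

HB.instance Definition _ := isIdealr.Build vring vring_max vring_max_idealr.

Definition vring_max_ideal : idealr vring := vring_max.
Local Notation kv := {ideal_quot vring_max_ideal}.

Lemma residue_eq0 (x : vring) : (\pi_kv x == 0) = (x \in vring_max).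
Proof. by rewrite -(rmorph0 (\pi_kv : vring -> kv)) piE Quotient.equivE subr0. Qed.

(* A nonzero class is represented by a unit of [O], whose inverse lies in [O]
   again; the default [0] of [insubd] only serves the zero class. *)
Definition residue_inv (q : kv) : kv := \pi_kv (insubd (0 : vring) (val (repr q))^-1).

Lemma residue_mulVf (q : kv) : q != 0 -> residue_inv q * q = 1.
Proof.
rewrite /residue_inv -{1 3}[q]reprK residue_eq0 => /negP qm.
have [x0 xiO] := max_idealPn (valP (repr q)) (fun xm => qm (proj2 (vring_maxE _) xm)).
rewrite -rmorphM -(rmorph1 (\pi_kv : vring -> kv)); congr (\pi_kv _).
by apply: val_inj; rewrite /= insubdK // mulVf.
Qed.

Lemma residue_inv0 : residue_inv 0 = 0.
Proof.
rewrite /residue_inv; apply/eqP; rewrite residue_eq0.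
have : repr (0 : kv) \in vring_max by rewrite -residue_eq0 reprK.
rewrite unfold_in /vring_max => /orP [/eqP ->|xiO].
  by rewrite invr0 insubdK ?rpred0 // unfold_in /vring_max eqxx.
by rewrite /insubd insubN // unfold_in /vring_max eqxx.
Qed.

HB.instance Definition _ := GRing.ComNzRing_isField.Build kv residue_mulVf residue_inv0.

Definition residue (x : K) : kv := \pi_kv (insubd (0 : vring) x).

Lemma residue_map_residue : residue_map O residue.
Proof.
split.
- rewrite /residue -(rmorph1 (\pi_kv : vring -> kv)); congr (\pi_kv _).
  by apply: val_inj; rewrite insubdK ?rpred1.
- move=> x y xO yO; rewrite /residue -rmorphD; congr (\pi_kv _).
  by apply: val_inj; rewrite /= !insubdK // rpredD.
- move=> x y xO yO; rewrite /residue -rmorphM; congr (\pi_kv _).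
  by apply: val_inj; rewrite /= !insubdK // rpredM.
- move=> x xO; rewrite /residue; split.
    by move/eqP; rewrite residue_eq0 => /vring_maxE; rewrite insubdK.
  by move=> xm; apply/eqP; rewrite residue_eq0; apply/vring_maxE; rewrite insubdK.
Qed.

End ResidueField.

Lemma residue_map_exists : exists (F : fieldType) (psi : K -> F), residue_map O psi.
Proof. by exists {ideal_quot vring_max_ideal}, residue; exact: residue_map_residue. Qed.

End ValuationRing.

Section Denominators.
Variable K : fieldExtType rat.

Lemma intr_neq0 (z : int) : z != 0 -> (z%:~R : K) != 0.
Proof. by move=> z0; rewrite -(rmorph_int (in_alg K)) fmorph_eq0 intr_eq0. Qed.

Lemma minPoly_coef_rat (x : K) i : exists q : rat, (minPoly 1 x)`_i == ratr q.
Proof.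
have /polyOverP/(_ i)/vlineP [q ->] := minPolyOver 1%VS x.
by exists q; rewrite alg_num_field.
Qed.

Definition minPoly_rat (x : K) i : rat := xchoose (minPoly_coef_rat x i).

Lemma minPoly_ratE (x : K) i : (minPoly 1 x)`_i = ratr (minPoly_rat x i).
Proof. exact/eqP/(xchooseP (minPoly_coef_rat x i)). Qed.

Definition integral_denom (x : K) : K :=
  \prod_(i < size (minPoly 1 x)) (denq (minPoly_rat x i))%:~R.

Definition common_denom n (A : 'I_n.+1 -> K) : K := \prod_i integral_denom (A i).

Lemma integral_denom_neq0 x : integral_denom x != 0.
Proof. by apply/prodf_neq0 => i _; apply: intr_neq0; exact: denq_neq0. Qed.

Lemma common_denom_neq0 n (A : 'I_n.+1 -> K) : common_denom A != 0.
Proof. by apply/prodf_neq0 => i _; exact: integral_denom_neq0. Qed.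

End Denominators.

Section DenominatorsAtPlace.
Variables (K : fieldExtType rat) (O : pred K).
Hypothesis HO : finite_place O.
HB.instance Definition _ := GRing.isSubringClosed.Build K O (vring_subring_closed HO).

Lemma integral_denom_vring x : integral_denom x \in O.
Proof. by apply: rpred_prod => i _; exact: rpred_int. Qed.

Lemma integral_denom_mulr_vring x : integral_denom x * x \in O.
Proof.
set p := minPoly 1 x; have [k sp] : exists k, size p = k.+2 by rewrite size_minPoly; eexists.
apply: (@vring_scaled_root _ _ HO k (fun i => p`_i)); first exact: integral_denom_vring.
  move=> i; have [ltip|] := ltnP i (size p); last first.
    by move=> /(nth_default 0) ->; rewrite mulr0 rpred0.
  rewrite minPoly_ratE /ratr /integral_denom -/p (bigD1 (Ordinal ltip)) //=.
  rewrite mulrAC mulrCA mulfV ?intr_neq0 ?denq_neq0 // mulr1 rpredM ?rpred_int //.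
  by apply: rpred_prod => j _; exact: rpred_int.
have := minPolyxx 1 x; rewrite -/p horner_coef sp big_ord_recr /= addrC.
by have /monicP := monic_minPoly 1 x; rewrite /lead_coef -/p sp => ->; rewrite mul1r.
Qed.

Lemma common_denom_mulr_vring n (A : 'I_n.+1 -> K) i : common_denom A * A i \in O.
Proof.
rewrite /common_denom (bigD1 i) //= mulrAC rpredM ?integral_denom_mulr_vring //.
by apply: rpred_prod => j _; exact: integral_denom_vring.
Qed.

End DenominatorsAtPlace.

Section SIntegers.
Variables (K : fieldType) (S : seq (pred K)).

Lemma OS_vring x : (forall O, finite_place O -> x \in O) -> OS S x.
Proof. by move=> xO O HO _; exact: xO. Qed.

Lemma OS1 : OS S 1. Proof. by move=> O []. Qed.

Lemma OSB x y : OS S x -> OS S y -> OS S (x - y).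
Proof. by move=> xS yS O HO vS; case: (HO) => _ + _ _ _; apply; [exact: xS | exact: yS]. Qed.

Lemma OSM x y : OS S x -> OS S y -> OS S (x * y).
Proof. by move=> xS yS O HO vS; case: (HO) => _ _ + _ _; apply; [exact: xS | exact: yS]. Qed.

Lemma OS0 : OS S 0. Proof. by rewrite -(subrr (1 : K)); apply: OSB; exact: OS1. Qed.

Lemma OSD x y : OS S x -> OS S y -> OS S (x + y).
Proof.
by move=> xS yS; rewrite -[y]opprK -[- y]sub0r; apply: OSB => //; apply: OSB => //; exact: OS0.
Qed.

Lemma OS_sum (I : Type) (r : seq I) (P : pred I) (F : I -> K) :
  (forall i, P i -> OS S (F i)) -> OS S (\sum_(i <- r | P i) F i).
Proof. by move=> FS; apply: (big_ind (OS S)) => //; [exact: OS0 | exact: OSD]. Qed.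

Variables (n : nat) (B : 'I_n.+1 -> K).

Definition OS_span (x : K) : Prop :=
  exists2 r : 'I_n.+1 -> K, (forall i, OS S (r i)) & x = \sum_i r i * B i.

Lemma OS_span_ideal : (forall i, OS S (B i)) -> OS_ideal S OS_span.
Proof.
move=> BS; split.
- by move=> _ [r rS ->]; apply: OS_sum => i _; exact: OSM.
- by exists (fun _ => 0) => [i|]; [exact: OS0 | rewrite big1 // => i _; rewrite mul0r].
- move=> _ _ [r rS ->] [r' r'S ->]; exists (fun i => r i + r' i) => [i|]; first exact: OSD.
  by rewrite -big_split; apply: eq_bigr => i _; rewrite mulrDl.
- move=> t _ tS [r rS ->]; exists (fun i => t * r i) => [i|]; first exact: OSM.
  by rewrite mulr_sumr; apply: eq_bigr => i _; rewrite mulrA.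
Qed.

Lemma OS_span_gen i : OS_span (B i).
Proof.
exists (fun j => (j == i)%:R) => [j|]; first by case: eqP => _; [exact: OS1 | exact: OS0].
by rewrite (bigD1 i) //= eqxx mul1r big1 ?addr0 // => j /negPf ->; rewrite mul0r.
Qed.

End SIntegers.

(* Clear denominators, then divide by a generator of the ideal spanned by the
   coordinates. *)
Lemma exists_OS_unimodular_rep (K : fieldExtType rat) n (S : seq (pred K))
    (A : 'I_n.+1 -> K) :
  OS_PID S -> nonzero_vec A -> exists2 l : K, l != 0 & OS_unimodular S (fun i => l * A i).
Proof.
move=> PID [j Aj]; set d := common_denom A; pose B i := d * A i.
have BS i : OS S (B i) by apply: OS_vring => O HO; exact: common_denom_mulr_vring.
have [g gS spanP] := PID _ (OS_span_ideal BS).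
have B_div i : exists2 t, OS S t & B i = t * g by apply/spanP; exact: OS_span_gen.
have g0 : g != 0.
  have [t _ Bj] := B_div j; apply: contraTneq (mulf_neq0 (common_denom_neq0 A) Aj).
  by move=> g0; rewrite -/d -/(B j) Bj g0 mulr0 eqxx.
exists (d / g); first by rewrite mulf_neq0 ?invr_eq0 ?common_denom_neq0.
split=> [i|]; first by have [t tS Bi] := B_div i; rewrite mulrAC -/(B i) Bi mulfK.
have [r rS gE] : OS_span S B g by apply/spanP; exists 1; [exact: OS1 | rewrite mul1r].
exists r => //; apply: (mulIf g0); rewrite mul1r [in RHS]gE mulr_suml.
by apply: eq_bigr => i _; rewrite -mulrA mulrAC -/(B i) mulfVK.
Qed.

Lemma exists_primitive_rep (K : fieldExtType rat) n (S : seq (pred K)) (A : 'I_n.+1 -> K) :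
  OS_PID S -> nonzero_vec A ->
  exists2 a, proportional a A & forall O, finite_place O -> notin_places S O -> primitive_rep O a.
Proof.
move=> PID A0; have [l l0 a_uni] := exists_OS_unimodular_rep PID A0.
exists (fun i => l * A i); first by exists l.
by move=> O HO vS; exact (unimodular_primitive_rep HO vS a_uni).
Qed.

Section ResidueMap.
Variables (K : fieldType) (O : pred K).
Hypothesis HO : finite_place O.
HB.instance Definition _ := GRing.isSubringClosed.Build K O (vring_subring_closed HO).
Variables (F : fieldType) (psi : K -> F).
Hypothesis Hpsi : residue_map O psi.

Lemma rmap1 : psi 1 = 1. Proof. by case: Hpsi. Qed.

Lemma rmapD x y : x \in O -> y \in O -> psi (x + y) = psi x + psi y.
Proof. by case: Hpsi => _ + _ _; apply. Qed.

Lemma rmapM x y : x \in O -> y \in O -> psi (x * y) = psi x * psi y.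
Proof. by case: Hpsi => _ _ + _; apply. Qed.

Lemma rmap_eq0 x : x \in O -> psi x = 0 <-> max_ideal O x.
Proof. by case: Hpsi => _ _ _; apply. Qed.

Lemma rmap0 : psi 0 = 0. Proof. by apply/rmap_eq0; [exact: rpred0 | exact: max_ideal0]. Qed.

Lemma rmapB x y : x \in O -> y \in O -> psi (x - y) = psi x - psi y.
Proof. by move=> xO yO; apply/eqP; rewrite eq_sym subr_eq -rmapD ?rpredB // subrK. Qed.

Lemma rmap_neq0 x : x \in O -> ~ max_ideal O x -> psi x != 0.
Proof. by move=> xO xm; apply/eqP => /(rmap_eq0 xO). Qed.

Lemma rmapX x k : x \in O -> psi (x ^+ k) = psi x ^+ k.
Proof.
move=> xO; elim: k => [|k IH]; first by rewrite !expr0 rmap1.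
by rewrite !exprS rmapM ?rpredX // IH.
Qed.

Lemma rmap_sum (I : Type) (r : seq I) (P : pred I) (G : I -> K) :
  (forall i, P i -> G i \in O) -> psi (\sum_(i <- r | P i) G i) = \sum_(i <- r | P i) psi (G i).
Proof.
move=> GO; suff [] : \sum_(i <- r | P i) G i \in O /\
  psi (\sum_(i <- r | P i) G i) = \sum_(i <- r | P i) psi (G i) by [].
elim/big_rec2: _ => [|i y z Pi [yO <-]]; first by rewrite rpred0 rmap0.
by rewrite rpredD ?GO // rmapD ?GO.
Qed.

Lemma rmap_prod (I : Type) (r : seq I) (P : pred I) (G : I -> K) :
  (forall i, P i -> G i \in O) -> psi (\prod_(i <- r | P i) G i) = \prod_(i <- r | P i) psi (G i).
Proof.
move=> GO; suff [] : \prod_(i <- r | P i) G i \in O /\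
  psi (\prod_(i <- r | P i) G i) = \prod_(i <- r | P i) psi (G i) by [].
elim/big_rec2: _ => [|i y z Pi [yO <-]]; first by rewrite rpred1 rmap1.
by rewrite rpredM ?GO // rmapM ?GO.
Qed.

Lemma rmap_meval n (f : {mpoly K[n.+1]}) (x : 'I_n.+1 -> K) :
  coeffs_in O f -> (forall i, x i \in O) -> psi f.@[x] = mmap psi (fun i => psi (x i)) f.
Proof.
move=> fO xO; have monO m : \prod_i x i ^+ m i \in O by apply: rpred_prod => i _; exact: rpredX.
rewrite mevalE /mmap rmap_sum => [|m _]; last exact: rpredM.
apply: eq_bigr => m _; rewrite rmapM // rmap_prod => [|i _]; last exact: rpredX.
by congr (_ * _); apply: eq_bigr => i _; rewrite rmapX.
Qed.

Lemma red_eq_rmap n (a b : 'I_n.+1 -> K) e :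
  primitive_rep O a -> primitive_rep O b -> (forall i, psi (a i) = e * psi (b i)) ->
  red_eq O a b.
Proof.
move=> [aO [j aj]] [bO [k bk]] abe; have [bk0 bkiO] := max_idealPn (bO k) bk.
pose c := a k / b k; have cO : c \in O by rewrite rpredM.
have ce : psi c = e by rewrite rmapM // abe -mulrA -rmapM ?bO // mulfV // rmap1 mulr1.
have [c0 ciO] : c != 0 /\ c^-1 \in O.
  apply: (max_idealPn cO) => /(rmap_eq0 cO); rewrite ce => e0.
  by apply: aj; apply/(rmap_eq0 (aO j)); rewrite abe e0 mul0r.
exists c; split=> // i; apply/rmap_eq0; first by rewrite rpredB ?rpredM.
by rewrite rmapB ?rpredM // rmapM // ce abe subrr.
Qed.

End ResidueMap.

Lemma scaled_comb_proportional (F : fieldType) n (v w : 'I_n.+1 -> F) k u :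
  k != 0 -> u != 0 -> (exists j, w j != 0) ->
  (exists c, forall i, k * (v i + u * w i) = c * v i) \/
  (exists c, forall i, k * (v i + u * w i) = c * w i) ->
  exists e, forall i, v i = e * w i.
Proof.
move=> k0 u0 [j wj] [[c ce]|[c ce]].
  have [ck|ck] := eqVneq c k.
    case/eqP: wj; have /eqP := ce j; rewrite ck mulrDr -subr_eq0 addrAC subrr add0r.
    by rewrite !mulf_eq0 (negPf k0) (negPf u0) => /eqP.
  have ck0 : c - k != 0 by rewrite subr_eq0.
  exists (k * u / (c - k)) => i; apply: (mulfI ck0).
  by rewrite mulrA [(c - k) * (_ / _)]mulrC divfK // mulrBl -ce; ring.
exists ((c - k * u) / k) => i; apply: (mulfI k0).
by rewrite mulrA [k * (_ / k)]mulrC divfK // mulrBl -ce; ring.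
Qed.

Section Lines.
Variables (K : fieldType) (n : nat).
Implicit Types (p q y z : 'I_n.+1 -> K) (I : {mpoly K[n.+1]} -> Prop).

Lemma meval_linear_form (c v : 'I_n.+1 -> K) :
  (\sum_i c i *: 'X_i : {mpoly K[n.+1]}).@[v] = \sum_i c i * v i.
Proof.
rewrite (big_morph (meval v) (mevalD v) (meval0 v)); apply: eq_bigr => i _.
by rewrite mevalZ mevalXU.
Qed.

(* If [y] is not in the row space of [p] and [q], some column of the cokernel
   gives a linear form vanishing on [p] and [q] but not on [y]. *)
Lemma line_ideal_span p q y :
  (forall f, line_ideal p q f -> f.@[y] = 0) ->
  exists s t, forall i, y i = s * p i + t * q i.
Proof.
move=> yL; pose M : 'M[K]_(2, n.+1) := \matrix_(i, j) (if i == 0 then p j else q j).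
pose yr : 'rV[K]_n.+1 := \row_j y j.
have [/submxP [D yD]|] := boolP (yr <= M)%MS.
  exists (D 0 0), (D 0 1) => i; have := congr1 (fun A : 'rV_n.+1 => A 0 i) yD.
  rewrite /= !mxE !big_ord_recr big_ord0 /= !mxE /= add0r => ->.
  by congr (D 0 _ * _ + D 0 _ * _); exact: val_inj.
rewrite submxE => /matrix0Pn [i0 [j]]; rewrite mxE (ord1 i0) => /eqP yC0; exfalso; apply: yC0.
pose C := cokermx M; have CM := mulmx_coker M.
have Cform r : \sum_i C i j * M r i = 0.
  have := congr1 (fun A : 'M_(2, n.+1) => A r j) CM; rewrite /= [in RHS]mxE => CMrj.
  by rewrite -[RHS]CMrj mxE; apply: eq_bigr => i _; rewrite mulrC.
rewrite -[RHS](yL (\sum_i C i j *: 'X_i)) => [|s t]; rewrite meval_linear_form.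
  by apply: eq_bigr => i _; rewrite mxE mulrC.
have -> : \sum_i C i j * (s * p i + t * q i) =
    s * \sum_i C i j * M 0 i + t * \sum_i C i j * M 1 i.
  by rewrite !mulr_sumr -big_split; apply: eq_bigr => i _; rewrite !mxE /=; ring.
by rewrite !Cform !mulr0 addr0.
Qed.

Lemma line_ideal_proportional y z y' z' f :
  proportional y y' -> proportional z z' -> line_ideal y' z' f -> line_ideal y z f.
Proof.
move=> [c _ yc] [d _ zd] yzf s t; rewrite -(yzf (s * c) (t * d)).
by apply: meval_eq => i /=; rewrite yc zd !mulrA.
Qed.

Lemma line_ideal_of_points I p q y z :
  (forall f, I f <-> line_ideal p q f) ->
  (forall f, I f -> f.@[y] = 0) -> (forall f, I f -> f.@[z] = 0) ->
  forall f, I f -> line_ideal y z f.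
Proof.
move=> IL yI zI; have IpqL f : line_ideal p q f -> I f by move/IL.
have [s1 [t1 yE]] := line_ideal_span (fun f fL => yI f (IpqL f fL)).
have [s2 [t2 zE]] := line_ideal_span (fun f fL => zI f (IpqL f fL)).
move=> f /IL pqf s t; rewrite -(pqf (s * s1 + t * s2) (s * t1 + t * t2)).
by apply: meval_eq => i /=; rewrite yE zE; ring.
Qed.

Lemma lin_indep2_comb_nonzero y z u : lin_indep2 y z -> nonzero_vec (fun i => y i + u * z i).
Proof.
move=> yz; apply: NNPP => yz0; have [] := yz 1 u => [i|/eqP]; last by rewrite oner_eq0.
by rewrite mul1r; apply: NNPP => /eqP yzi; apply: yz0; exists i.
Qed.

Lemma Kpoint_comb I y z u :
  lin_indep2 y z -> (forall f, I f -> line_ideal y z f) -> Kpoint I (fun i => y i + u * z i).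
Proof.
move=> yz IL; split=> [|f /IL yzf]; first exact: lin_indep2_comb_nonzero.
by rewrite -(yzf 1 u); apply: meval_eq => i /=; rewrite mul1r.
Qed.

End Lines.

Section NonReduction.
Variables (K : fieldType) (O : pred K).
Hypothesis HO : finite_place O.
HB.instance Definition _ := GRing.isSubringClosed.Build K O (vring_subring_closed HO).
Variable n : nat.

Lemma red_notin_unit_comb (IL ID : {mpoly K[n.+1]} -> Prop) (A B a b : 'I_n.+1 -> K) u :
  red_intersection_is2 O IL ID A B ->
  primitive_rep O a -> proportional a A -> primitive_rep O b -> proportional b B ->
  ~ red_eq O a b -> (forall f, IL f -> line_ideal a b f) ->
  u \in O -> u != 0 -> u^-1 \in O ->
  red_notin O ID (fun i => a i + u * b i).
Proof.
move=> redLD pa aA pb bB nab abL uO u0 uiO x' px' [k k0 x'E] x'D.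
have [F [psi Hpsi]] := residue_map_exists HO.
have [[aO _] [bO [j bj]]] := (pa, pb); have [x'O [l x'l]] := px'.
have nprop : ~ exists e, forall i, psi (a i) = e * psi (b i).
  by case=> e abe; apply/nab/(red_eq_rmap HO Hpsi pa pb abe).
have xO i : a i + u * b i \in O by rewrite rpredD ?rpredM.
have psix i : psi (a i + u * b i) = psi (a i) + psi u * psi (b i).
  by rewrite (rmapD Hpsi) ?(rmapM Hpsi) ?rpredM.
have px : primitive_rep O (fun i => a i + u * b i).
  split=> //; apply: NNPP => xm; apply: nprop; exists (- psi u) => i.
  have /(rmap_eq0 Hpsi (xO i)) : max_ideal O (a i + u * b i).
    by apply: NNPP => xim; apply: xm; exists i.
  by rewrite psix mulNr => /eqP; rewrite addr_eq0 => /eqP.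
have [kO _ kiO] := primitive_scale_unit HO px' px x'E.
have psix' i : psi (x' i) = psi k * (psi (a i) + psi u * psi (b i)).
  by rewrite x'E (rmapM Hpsi) // psix.
apply: nprop; apply: (@scaled_comb_proportional _ _ _ _ (psi k) (psi u)).
- by apply: (rmap_neq0 Hpsi kO); apply: max_ideal_unit.
- by apply: (rmap_neq0 Hpsi uO); apply: max_ideal_unit.
- by exists j; apply: (rmap_neq0 Hpsi (bO j)).
have [[c x'c]|[c x'c]] : (exists c, forall i, psi (x' i) = c * psi (a i)) \/
                         (exists c, forall i, psi (x' i) = c * psi (b i)).
  apply: (redLD a b pa aA pb bB F psi Hpsi) => [|f fL fO|f fD fO].
  - by exists l; apply: (rmap_neq0 Hpsi (x'O l)).
  - rewrite -(rmap_meval HO Hpsi) // -(rmap0 HO Hpsi); congr psi.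
    by rewrite -(abL f fL k (k * u)); apply: meval_eq => i; rewrite x'E mulrDr mulrA.
  - have fx'm := x'D f fD fO.
    by rewrite -(rmap_meval HO Hpsi) //; apply/(rmap_eq0 Hpsi (max_ideal_vring fx'm)).
- by left; exists c => i; rewrite -psix' x'c.
by right; exists c => i; rewrite -psix' x'c.
Qed.

End NonReduction.

Section UnitCombinations.
Variables (K : fieldType) (n : nat).
Implicit Types a b y : 'I_n.+1 -> K.

Lemma proportional_comb_uniq a b y u u' :
  lin_indep2 a b -> proportional (fun i => a i + u * b i) y ->
  proportional (fun i => a i + u' * b i) y -> u = u'.
Proof.
move=> ab [c c0 yc] [c' c'0 yc'].
have [] : c' - c = 0 /\ c' * u - c * u' = 0.
  apply: ab => i; have -> : (c' - c) * a i + (c' * u - c * u') * b i =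
      c' * (a i + u * b i) - c * (a i + u' * b i) by ring.
  by rewrite yc yc' mulrCA subrr.
by move/eqP; rewrite subr_eq0 => /eqP -> /eqP; rewrite subr_eq0 => /eqP /(mulfI c0).
Qed.

Lemma comb_avoid_points a b (s : seq ('I_n.+1 -> K)) :
  lin_indep2 a b -> exists L : seq K, forall u, u \notin L ->
    forall y, List.In y s -> ~ proportional (fun i => a i + u * b i) y.
Proof.
move=> ab; elim: s => [|y s [L avoidL]]; first by exists [::].
have [[u0 yu0]|noy] := classic (exists u0, proportional (fun i => a i + u0 * b i) y).
  exists (u0 :: L) => u; rewrite inE negb_or => /andP [uu0 uL] z [<- yu|]; last exact: avoidL.
  by move: uu0; rewrite (proportional_comb_uniq ab yu yu0) eqxx.
by exists L => u uL z [<- yu|]; [apply: noy; exists u | exact: avoidL].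
Qed.

Lemma infinite_unit_combs (S : seq (pred K)) a b (P : ('I_n.+1 -> K) -> Prop) :
  OS_units_infinite S -> lin_indep2 a b ->
  (forall u, OS_unit S u -> P (fun i => a i + u * b i)) -> infinite_proj_set P.
Proof.
move=> units ab Pcomb s; have [L avoidL] := comb_avoid_points s ab.
have [u [uS uL]] := units L; exists (fun i => a i + u * b i).
by split; [exact: Pcomb | exact: lin_indep2_comb_nonzero | exact: avoidL].
Qed.

End UnitCombinations.

Theorem proposition3p1
  (K : fieldExtType rat) (n : nat) (S : seq (pred K))
  (IX IL ID : {mpoly K[n.+1]} -> Prop) (A B : 'I_n.+1 -> K) :
  (forall w, List.In w S -> finite_place w) ->
  OS_units_infinite S ->
  OS_PID S ->
  closed_subvariety IX ->
  closed_subvariety IL -> is_line IL -> (forall f, IX f -> IL f) ->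
  closed_subvariety ID -> (forall f, IX f -> ID f) -> ~ (forall f, ID f -> IX f) ->
  Kpoint IL A -> Kpoint ID A -> Kpoint IL B -> Kpoint ID B ->
  geom_intersection_is2 IL ID A B ->
  S_coprime S A B ->
  (forall O, finite_place O -> notin_places S O ->
     red_intersection_is2 O IL ID A B) ->
  infinite_proj_set (fun x => Kpoint IL x /\ S_integral S IX ID x).
Proof.
move=> _ units PID _ _ [p [q [pq ILpq]]] IXL _ _ _ LA _ LB _ _ AB redLD.
have KpointX x : Kpoint IL x -> Kpoint IX x by case=> x0 xL; split=> // f /IXL; exact: xL.
(* Independence of the normalized [a], [b] is read off at a finite place outside
   [S]; if there is none, every point of [L] is S-integral. *)
have [[O0 [HO0 vS0]]|no_place] := classic (exists O, finite_place O /\ notin_places S O);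
  last first.
  apply: (infinite_unit_combs units pq) => u _.
  have xL := Kpoint_comb u pq (fun f => (ILpq f).1).
  by split=> //; split=> [|O HO vS]; [exact: KpointX | case: no_place; exists O].
have [a aA pa] := exists_primitive_rep PID LA.1.
have [b bB pb] := exists_primitive_rep PID LB.1.
have nab O HO vS := AB O HO vS a b (pa O HO vS) aA (pb O HO vS) bB.
have abL f (fL : IL f) : line_ideal a b f.
  exact: line_ideal_proportional aA bB (line_ideal_of_points ILpq LA.2 LB.2 fL).
have ab := lin_indep2_of_not_red_eq HO0 (pa O0 HO0 vS0) (pb O0 HO0 vS0) (nab O0 HO0 vS0).
apply: (infinite_unit_combs units ab) => u [uS [u0 uiS]].
have xL := Kpoint_comb u ab abL.
split=> //; split=> [|O HO vS]; first exact: KpointX.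
apply: (red_notin_unit_comb HO (redLD O HO vS)) => //;
  [exact: pa | exact: pb | exact: nab | exact: uS | exact: uiS].
Qed.
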